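(* Let $\Lambda$ be a finite group generated by a symmetric subset $S\subset\Lambda$ with $\delta:=\big\|\frac1{|S|}\sum_{g\in S}\lambda^0(g)\big\|<1$. Suppose $(\alpha_g)_{g\in S}$ are complex numbers of modulus $1$ and $\xi\in\ell_2\Lambda$ is a unit vector such that $\varepsilon:=\max_{g\in S}\|\lambda(g)\xi-\alpha_g\xi\|>0$. Then there is a (unitary, one-dimensional) character $\chi$ of $\Lambda$ with $$\max_{g\in S}|\bar\chi(g)-\alpha_g|\le\Big(\frac{100\varepsilon}{1-\delta}\Big)^{1/2}.$$
   Context: $\lambda$ is the left regular representation of $\Lambda$ on $\ell_2\Lambda$ and $\lambda^0$ is its restriction to $\ell_2\Lambda\ominus\mathbb C\mathbf 1$ (the orthogonal complement of the constant functions). A character means a group homomorphism $\Lambda\to\{z\in\mathbb C:|z|=1\}$. *)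

From HB Require Import structures.
From mathcomp Require Import all_boot all_order all_algebra all_fingroup.
Set Implicit Arguments. Unset Strict Implicit. Unset Printing Implicit Defensive.
Import Order.TTheory GRing.Theory Num.Theory.
Local Open Scope ring_scope.

(* The finite group Lambda is the whole finGroupType gT; l2 Lambda is the
   space of functions gT -> C, C a numeric closed field (complex numbers). *)

Definition l2norm (C : numClosedFieldType) (gT : finGroupType) (v : gT -> C) : C :=
  sqrtC (\sum_(x : gT) `|v x| ^+ 2).

Definition lreg (C : numClosedFieldType) (gT : finGroupType) (g : gT) (v : gT -> C)
  : gT -> C := fun x => v (g^-1 * x)%g.

Definition orth_const (C : numClosedFieldType) (gT : finGroupType) (v : gT -> C) : Prop :=
  \sum_(x : gT) v x * (1 : C)^* = 0.

Definition avg_op (C : numClosedFieldType) (gT : finGroupType) (S : {set gT})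
  (v : gT -> C) : gT -> C :=
  fun x => #|S|%:R^-1 * \sum_(g in S) lreg g v x.

(* d bounds the operator norm of the averaging operator restricted to the
   orthogonal complement of the constants (i.e. of lambda^0 averaged) *)
Definition avg0_bound (C : numClosedFieldType) (gT : finGroupType) (S : {set gT})
  (d : C) : Prop :=
  forall v : gT -> C, orth_const v -> l2norm (avg_op S v) <= d * l2norm v.

Definition is_avg0_norm (C : numClosedFieldType) (gT : finGroupType) (S : {set gT})
  (delta : C) : Prop :=
  [/\ 0 <= delta, avg0_bound S delta &
      forall d : C, 0 <= d -> avg0_bound S d -> delta <= d].

Definition is_character (C : numClosedFieldType) (gT : finGroupType) (chi : gT -> C) : Prop :=
  (forall x y : gT, chi (x * y)%g = chi x * chi y) /\ (forall x : gT, `|chi x| = 1).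

From HB Require Import structures.
From mathcomp Require Import all_boot all_order all_algebra all_fingroup.
Set Implicit Arguments. Unset Strict Implicit. Unset Printing Implicit Defensive.
Import Order.TTheory GRing.Theory Num.Theory.
Local Open Scope ring_scope.

(* Let M be the average over g of the orthogonal projections onto the lines
   spanned by lambda(g) xi: a positive operator of trace 1 commuting with lambda.
   With f_h(x) = xi(x) * conj (xi(x h)) one has
   <M xi, xi> = |Lambda|^-1 * sum_h |sum_x f_h(x)|^2 and sum_h ||f_h||^2 = 1, so
   1 - <M xi, xi> is the total variance sum_h ||f_h - mean f_h||^2.  The spectral
   gap bounds ||f - mean f|| by ||f - avg_S f|| / (1 - delta), and almost
   invariance of xi up to the phases alpha_g makes every f_h almost invariant
   (the phases cancel): sum_h ||f_h - lambda(g) f_h||^2 <= 4 eps^2.  Hence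
   <M xi, xi> >= 1 - 4 t^2 with t = eps / (1 - delta), so M has an eigenvalue
   above 1/2.  It is simple, the eigenvalues being nonnegative of sum 1, so its
   eigenline is lambda-invariant and lambda acts on it by a character beta.  As
   xi has mass at least 1 - 8 t^2 on that line,
   (1 - 8 t^2) |beta(g) - alpha_g|^2 <= ||lambda(g) xi - alpha_g xi||^2 <= eps^2,
   and chi = conj beta is the character sought. *)

Lemma sum_mul_delta (R : nzSemiRingType) (I : finType) (F : I -> R) (k : I) :
  \sum_i F i * (i == k)%:R = F k.
Proof.
rewrite (bigD1 k) //= eqxx mulr1 big1 ?addr0 // => i /negbTE ->.
by rewrite mulr0.
Qed.

Section FunctionSpace.
Variables (C : numClosedFieldType) (T : finType).
Implicit Types (a b v w : T -> C) (F : T -> C).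

Lemma sum_enum_val F : \sum_x F x = \sum_(i < #|T|) F (enum_val i).
Proof. by rewrite -big_enum_val; apply: eq_bigl. Qed.

Definition sqnorm v : C := \sum_x `|v x| ^+ 2.
Definition inner a b : C := \sum_x a x * (b x)^*.

Lemma sqnorm_ge0 v : 0 <= sqnorm v.
Proof. by apply: sumr_ge0 => x _; rewrite exprn_ge0. Qed.

Lemma eq_sqnorm v w : v =1 w -> sqnorm v = sqnorm w.
Proof. by move=> E; apply: eq_bigr => x _; rewrite E. Qed.

Lemma inner_self v : inner v v = sqnorm v.
Proof. by apply: eq_bigr => x _; rewrite normCK. Qed.

Definition row_of (a : T -> C) : 'rV[C]_#|T| := \row_(i < #|T|) a (enum_val i).

Lemma dotmx_row_of a b : dotmx (row_of a) (row_of b) = inner a b.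
Proof.
rewrite dotmxE !mxE /inner sum_enum_val.
by apply: eq_bigr => i _; rewrite !mxE.
Qed.

Lemma normr_inner_le a b : `|inner a b| <= sqrtC (sqnorm a) * sqrtC (sqnorm b).
Proof.
rewrite -!inner_self -!dotmx_row_of.
exact: (CauchySchwarz_sqrt (@dotmx C #|T|) (row_of a) (row_of b)).1.
Qed.

Lemma sqr_normr_inner_le a b : `|inner a b| ^+ 2 <= sqnorm a * sqnorm b.
Proof.
move: (normr_inner_le a b).
rewrite -ler_sqr ?nnegrE ?normr_ge0 ?mulr_ge0 ?sqrtC_ge0 ?sqnorm_ge0 //.
by rewrite exprMn !sqrtCK.
Qed.

Lemma sqr_normr_sum_le (A : {pred T}) F :
  `|\sum_(i in A) F i| ^+ 2 <= #|A|%:R * \sum_(i in A) `|F i| ^+ 2.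
Proof.
pose FA i := if i \in A then F i else 0; pose oneA i : C := if i \in A then 1 else 0.
have -> : \sum_(i in A) F i = inner FA oneA.
  rewrite big_mkcond; apply: eq_bigr => i _.
  by rewrite /FA /oneA; case: (i \in A); rewrite ?rmorph1 ?mulr1 ?mul0r.
have -> : \sum_(i in A) `|F i| ^+ 2 = sqnorm FA.
  rewrite big_mkcond; apply: eq_bigr => i _.
  by rewrite /FA; case: (i \in A); rewrite ?normr0 ?expr0n.
have -> : #|A|%:R = sqnorm oneA.
  rewrite -sum1_card natr_sum big_mkcond; apply: eq_bigr => i _.
  by rewrite /oneA; case: (i \in A); rewrite ?normr1 ?expr1n ?normr0 ?expr0n.
by rewrite mulrC sqr_normr_inner_le.
Qed.

Lemma sqr_normr_sum F : `|\sum_x F x| ^+ 2 = \sum_x \sum_y F x * (F y)^*.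
Proof.
rewrite normCK rmorph_sum mulr_suml; apply: eq_bigr => x _.
by rewrite mulr_sumr.
Qed.

Lemma sqnorm_sub_mean F (m : C) : #|T|%:R * m = \sum_x F x ->
  sqnorm (fun x => F x - m) = sqnorm F - #|T|%:R * `|m| ^+ 2.
Proof.
move=> hm; rewrite /sqnorm.
under eq_bigr do rewrite normCK rmorphB /= mulrBl !mulrBr.
rewrite !sumrB -!mulr_suml -!mulr_sumr -rmorph_sum -hm.
under [in \sum_x `|F x| ^+ 2]eq_bigr do rewrite normCK.
rewrite sumr_const normCK rmorphM /= conjC_nat -[m *+ _]mulr_natl.
by rewrite [m * (_ * _)]mulrCA !mulrA [X in _ - X]subrr subr0.
Qed.

End FunctionSpace.

Lemma sqr_normrD_le (C : numClosedFieldType) (p q : C) :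
  `|p + q| ^+ 2 <= 2%:R * (`|p| ^+ 2 + `|q| ^+ 2).
Proof.
have := sqr_normr_sum_le predT (fun i : bool => if i then p else q).
by rewrite !big_mkcond /= !big_bool /= cardT enumT unlock.
Qed.

Section RegularRepresentation.
Variables (C : numClosedFieldType) (gT : finGroupType).
Implicit Types (v : gT -> C) (g h : gT).

Lemma card_neq0 : #|gT|%:R != 0 :> C.
Proof. by rewrite pnatr_eq0 -lt0n; apply/card_gt0P; exists 1%g. Qed.

Lemma sqnorm_lreg g v : sqnorm (lreg g v) = sqnorm v.
Proof.
rewrite /sqnorm (reindex_inj (mulgI g)) /=; apply: eq_bigr => x _.
by rewrite /lreg mulKg.
Qed.

Lemma lregM g h v y : lreg (g * h)%g v y = lreg h v (g^-1 * y)%g.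
Proof. by rewrite /lreg invMg mulgA. Qed.

Lemma sqnorm_l2norm v : sqnorm v = l2norm v ^+ 2.
Proof. by rewrite sqrtCK. Qed.

Lemma sqnorm_le_sqr v (e : C) : 0 <= e -> l2norm v <= e -> sqnorm v <= e ^+ 2.
Proof.
move=> e0 le_e; rewrite sqnorm_l2norm ler_sqr ?nnegrE //.
by rewrite sqrtC_ge0 sqnorm_ge0.
Qed.

End RegularRepresentation.

Section AverageProjection.
Variables (C : numClosedFieldType) (gT : finGroupType) (xi : gT -> C).
Local Notation n := #|gT|.
Local Open Scope sesquilinear_scope.
Implicit Types (v w : gT -> C) (g h x y : gT).

(* Functions act on the right of this kernel, as row vectors:
   [proj_avg w = |gT|^-1 * \sum_g inner w (lreg g xi) * lreg g xi]. *)
Definition proj_avg_kernel x y : C :=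
  n%:R^-1 * \sum_g (xi (g^-1 * x)%g)^* * xi (g^-1 * y)%g.
Definition proj_avg w y : C := \sum_x w x * proj_avg_kernel x y.

Definition proj_avg_mx : 'M[C]_n :=
  \matrix_(i, j) proj_avg_kernel (enum_val i) (enum_val j).

Lemma proj_avg_mx_normal : proj_avg_mx \is normalmx.
Proof.
suff herm : proj_avg_mx ^t* = proj_avg_mx by apply/normalmxP; rewrite herm.
apply/matrixP => i j; rewrite !mxE rmorphM /= rmorphV ?unitfE ?card_neq0 //=.
rewrite conjC_nat rmorph_sum /=; congr (_ * _); apply: eq_bigr => g _.
by rewrite rmorphM /= conjCK mulrC.
Qed.

Definition eigval (i : 'I_n) : C := spectral_diag proj_avg_mx 0 i.
Definition eigvec (i : 'I_n) x : C := spectralmx proj_avg_mx i (enum_rank x).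

Lemma eigvec_orthonormal i j : inner (eigvec i) (eigvec j) = (i == j)%:R.
Proof.
have /matrixP/(_ i j) := unitarymxP (spectral_unitarymx proj_avg_mx).
rewrite !mxE => <-; rewrite /inner sum_enum_val.
by apply: eq_bigr => k _; rewrite /eigvec enum_valK !mxE.
Qed.

Lemma eigvec_complete x y : \sum_i (eigvec i x)^* * eigvec i y = (x == y)%:R.
Proof.
have U := spectral_unitarymx proj_avg_mx.
have : (spectralmx proj_avg_mx) ^t* *m spectralmx proj_avg_mx = 1%:M.
  by rewrite -invmx_unitary // mulVmx // unitarymx_unit.
move/matrixP/(_ (enum_rank x) (enum_rank y)).
rewrite !mxE (inj_eq enum_rank_inj) => <-; apply: eq_bigr => k _.
by rewrite /eigvec !mxE.
Qed.

Lemma proj_avg_kernel_spectral x y :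
  proj_avg_kernel x y = \sum_i (eigvec i x)^* * eigval i * eigvec i y.
Proof.
have := orthomx_spectralP proj_avg_mx_normal.
rewrite invmx_unitary ?spectral_unitarymx //.
move/matrixP/(_ (enum_rank x) (enum_rank y)); rewrite !mxE !enum_rankK => ->.
apply: eq_bigr => i _; rewrite !mxE (bigD1 i) //= big1 => [|k /negbTE ki].
  by rewrite addr0 !mxE eqxx mulr1n.
by rewrite !mxE ki mulr0n mulr0.
Qed.

Definition coef i w := inner w (eigvec i).

Lemma coef_eigvec i j : coef j (eigvec i) = (i == j)%:R.
Proof. exact: eigvec_orthonormal. Qed.

Lemma coef_linear k (a : C) v w : coef k (fun y => v y - a * w y) = coef k v - a * coef k w.
Proof.
rewrite /coef /inner mulr_sumr -sumrB; apply: eq_bigr => x _.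
by rewrite mulrBl mulrA.
Qed.

Lemma conj_coef i w : (coef i w)^* = \sum_x (w x)^* * eigvec i x.
Proof.
rewrite /coef /inner rmorph_sum; apply: eq_bigr => x _.
by rewrite rmorphM /= conjCK.
Qed.

Lemma coef_expansion w y : w y = \sum_i coef i w * eigvec i y.
Proof.
rewrite /coef /inner; under eq_bigr do rewrite mulr_suml.
rewrite exchange_big /= -[LHS](sum_mul_delta w y); apply: eq_bigr => x _.
by rewrite -eigvec_complete mulr_sumr; apply: eq_bigr => i _; rewrite mulrA.
Qed.

Lemma proj_avg_expansion w y :
  proj_avg w y = \sum_i coef i w * eigval i * eigvec i y.
Proof.
rewrite /proj_avg /coef /inner.
under [RHS]eq_bigr do rewrite mulr_suml mulr_suml.
rewrite exchange_big /=; apply: eq_bigr => x _.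
by rewrite proj_avg_kernel_spectral mulr_sumr; apply: eq_bigr => i _; rewrite !mulrA.
Qed.

Lemma coef_proj_avg k w : coef k (proj_avg w) = eigval k * coef k w.
Proof.
rewrite /coef {1}/inner; under eq_bigr do rewrite proj_avg_expansion mulr_suml.
rewrite exchange_big /= mulrC -(sum_mul_delta (fun i => coef i w * eigval i) k).
apply: eq_bigr => i _; rewrite -eigvec_orthonormal mulr_sumr.
by apply: eq_bigr => x _; rewrite !mulrA.
Qed.

Lemma sum_sqr_coef w : \sum_i `|coef i w| ^+ 2 = sqnorm w.
Proof.
transitivity (\sum_i coef i w * (coef i w)^*).
  by apply: eq_bigr => i _; rewrite normCK.
rewrite /sqnorm; under eq_bigr do rewrite conj_coef {1}/coef /inner mulr_suml.
rewrite exchange_big /=; apply: eq_bigr => x _.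
rewrite normCK -(sum_mul_delta (fun y => w x * (w y)^*) x).
under eq_bigr do rewrite mulr_sumr.
rewrite exchange_big /=; apply: eq_bigr => y _.
rewrite eq_sym -eigvec_complete mulr_sumr; apply: eq_bigr => i _.
by rewrite mulrACA.
Qed.

Lemma inner_proj_avg_spectral w :
  inner (proj_avg w) w = \sum_i eigval i * `|coef i w| ^+ 2.
Proof.
rewrite /inner; under eq_bigr do rewrite proj_avg_expansion mulr_suml.
rewrite exchange_big /=; apply: eq_bigr => i _.
rewrite normCK conj_coef !mulr_sumr; apply: eq_bigr => y _.
by rewrite [in RHS]mulrCA -!mulrA [eigvec i y * _]mulrC.
Qed.

Lemma inner_proj_avg w :
  inner (proj_avg w) w = n%:R^-1 * \sum_g `|inner w (lreg g xi)| ^+ 2.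
Proof.
rewrite /inner /proj_avg /proj_avg_kernel mulr_sumr.
transitivity (\sum_y \sum_x \sum_g
  n%:R^-1 * (w x * (xi (g^-1 * x)%g)^* * (xi (g^-1 * y)%g * (w y)^*))).
  apply: eq_bigr => y _; rewrite mulr_suml; apply: eq_bigr => x _.
  rewrite !mulr_sumr mulr_suml; apply: eq_bigr => g _.
  by rewrite mulrCA -!mulrA; congr (_ * _); rewrite !mulrA -mulrA mulrACA.
rewrite exchange_big /=; under eq_bigr do rewrite exchange_big /=.
rewrite exchange_big /=; apply: eq_bigr => g _.
under eq_bigr do rewrite -mulr_sumr.
rewrite -mulr_sumr; congr (_ * _).
rewrite normCK mulr_suml; apply: eq_bigr => x _.
rewrite rmorph_sum mulr_sumr; apply: eq_bigr => y _.
by rewrite /lreg rmorphM /= conjCK [_ * xi _]mulrC.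
Qed.

Lemma eigval_ge0 i : 0 <= eigval i.
Proof.
have -> : eigval i = inner (proj_avg (eigvec i)) (eigvec i).
  rewrite inner_proj_avg_spectral (bigD1 i) //= big1 => [|k ki].
    by rewrite coef_eigvec eqxx normr1 expr1n mulr1 addr0.
  by rewrite coef_eigvec eq_sym (negbTE ki) normr0 expr0n /= mulr0.
rewrite inner_proj_avg mulr_ge0 ?invr_ge0 ?ler0n //.
by apply: sumr_ge0 => g _; rewrite exprn_ge0.
Qed.

Lemma sum_eigval : sqnorm xi = 1 -> \sum_i eigval i = 1.
Proof.
move=> xi1; transitivity (\sum_x proj_avg_kernel x x).
  under [RHS]eq_bigr do rewrite proj_avg_kernel_spectral.
  rewrite [RHS]exchange_big /=; apply: eq_bigr => i _.
  have := eigvec_orthonormal i i; rewrite eqxx mulr1n => ortho.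
  rewrite -[LHS]mulr1 -ortho mulr_sumr.
  by apply: eq_bigr => x _; rewrite mulrCA mulrC [eigval i * _]mulrC.
rewrite /proj_avg_kernel -mulr_sumr exchange_big /=.
transitivity (n%:R^-1 * \sum_(g : gT) (1 : C)); last first.
  by rewrite sumr_const mulVf ?card_neq0.
congr (_ * _); apply: eq_bigr => g _; rewrite -xi1 /sqnorm.
rewrite (reindex_inj (mulgI g)) /=; apply: eq_bigr => x _.
by rewrite mulKg normCK mulrC.
Qed.

Lemma proj_avg_lreg g w y : proj_avg (lreg g w) y = proj_avg w (g^-1 * y)%g.
Proof.
rewrite /proj_avg (reindex_inj (mulgI g)) /=; apply: eq_bigr => x _.
rewrite /lreg mulKg /proj_avg_kernel (reindex_inj (mulgI g)) /=.
by do 2!congr (_ * _); apply: eq_bigr => h _; rewrite !invMg -!mulgA mulKg.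
Qed.

Lemma eq_coef i v w : v =1 w -> coef i v = coef i w.
Proof. by move=> E; apply: eq_bigr => x _; rewrite E. Qed.

Lemma coefZ i (a : C) w : coef i (fun y => a * w y) = a * coef i w.
Proof. by rewrite /coef /inner mulr_sumr; apply: eq_bigr => x _; rewrite mulrA. Qed.

Lemma proj_avg_eigvec i y : proj_avg (eigvec i) y = eigval i * eigvec i y.
Proof.
rewrite proj_avg_expansion (bigD1 i) //= big1 ?addr0 => [|k ki].
  by rewrite coef_eigvec eqxx mul1r.
by rewrite coef_eigvec eq_sym (negbTE ki) !mul0r.
Qed.

Lemma eigvec_neq0 i : exists y, eigvec i y != 0.
Proof.
case: (pickP (fun y => eigvec i y != 0)) => [y hy|eigvec0]; first by exists y.
have := eigvec_orthonormal i i; rewrite eqxx /inner big1 => [/eqP|x _].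
  by rewrite eq_sym oner_eq0.
by move/negbT: (eigvec0 x); rewrite negbK => /eqP ->; rewrite mul0r.
Qed.

Section SimpleEigenvalue.
Variable j : 'I_n.
Hypothesis eigval_simple : forall k, k != j -> eigval k != eigval j.

Lemma coef_lreg_eigvec k g : k != j -> coef k (lreg g (eigvec j)) = 0.
Proof.
move=> kj; apply/eqP; apply: contraR (eigval_simple kj) => ck_neq0.
apply/eqP/(mulIf ck_neq0); rewrite -coef_proj_avg -coefZ.
by apply: eq_coef => y; rewrite proj_avg_lreg proj_avg_eigvec.
Qed.

Definition eig_char g := coef j (lreg g (eigvec j)).

Lemma lreg_eigvec g y : lreg g (eigvec j) y = eig_char g * eigvec j y.
Proof.
rewrite [LHS]coef_expansion (bigD1 j) //= big1 ?addr0 // => k kj.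
by rewrite coef_lreg_eigvec // mul0r.
Qed.

Lemma eig_charM g h : eig_char (g * h)%g = eig_char g * eig_char h.
Proof.
have [y0 uy0] := eigvec_neq0 j.
apply: (mulIf uy0); rewrite -lreg_eigvec lregM lreg_eigvec.
by rewrite -/(lreg g _ y0) lreg_eigvec mulrA [eig_char h * _]mulrC.
Qed.

Lemma normr_eig_char g : `|eig_char g| = 1.
Proof.
have := sum_sqr_coef (lreg g (eigvec j)); rewrite sqnorm_lreg -sum_sqr_coef.
rewrite [LHS](bigD1 j) //= big1 ?addr0 => [|k kj]; last first.
  by rewrite coef_lreg_eigvec // normr0 expr0n.
rewrite [RHS](bigD1 j) //= big1 ?addr0 => [|k kj]; last first.
  by rewrite coef_eigvec eq_sym (negbTE kj) normr0 expr0n.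
by rewrite coef_eigvec eqxx normr1 expr1n => /eqP; rewrite sqrp_eq1 // => /eqP.
Qed.

Lemma eig_charV g : eig_char (g^-1)%g = (eig_char g)^*.
Proof.
have unit_char h : eig_char h != 0 by rewrite -normr_eq0 normr_eig_char oner_eq0.
have char1 : eig_char 1 = 1.
  by apply: (mulfI (unit_char 1%g)); rewrite -eig_charM mulg1 mulr1.
apply: (mulfI (unit_char g)); rewrite -eig_charM mulgV char1.
by rewrite -normCK normr_eig_char expr1n.
Qed.

Lemma coef_lreg g w : coef j (lreg g w) = eig_char g * coef j w.
Proof.
rewrite /coef /inner (reindex_inj (mulgI g)) /= mulr_sumr; apply: eq_bigr => x _.
have -> : eigvec j (g * x)%g = eig_char (g^-1)%g * eigvec j x.
  by rewrite -lreg_eigvec /lreg invgK.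
by rewrite /lreg mulKg eig_charV rmorphM /= conjCK mulrCA.
Qed.

Lemma sqr_coef_eig_char_le g (a : C) :
  `|coef j xi| ^+ 2 * `|eig_char g - a| ^+ 2 <= sqnorm (fun x => lreg g xi x - a * xi x).
Proof.
rewrite mulrC -exprMn -normrM mulrBl -coef_lreg -coef_linear -sum_sqr_coef.
by rewrite (bigD1 j) //= lerDl sumr_ge0 // => i _; rewrite exprn_ge0.
Qed.

End SimpleEigenvalue.

Section UnitVector.
Hypothesis xi_unit : sqnorm xi = 1.

Lemma eigval_le1 j : eigval j <= 1.
Proof.
rewrite -(sum_eigval xi_unit) (bigD1 j) //= lerDl.
by apply: sumr_ge0 => i _; apply: eigval_ge0.
Qed.

Lemma eigval_le_subr k j : k != j -> eigval k <= 1 - eigval j.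
Proof.
move=> kj; rewrite lerBrDl -(sum_eigval xi_unit) (bigD1 j) //= (bigD1 k) //=.
by rewrite addrA lerDl; apply: sumr_ge0 => i _; apply: eigval_ge0.
Qed.

Lemma exists_eigval_ge (s : C) : s \is Num.real ->
  1 - s <= inner (proj_avg xi) xi -> exists j, 1 - s <= eigval j.
Proof.
move=> sR hq; case: (pickP (fun i => 1 - s <= eigval i)) => [j hj|small].
  by exists j.
have lt_eigval i : eigval i < 1 - s.
  by rewrite real_ltNge ?small ?rpredB ?rpred1 // ger0_real ?eigval_ge0.
pose t i := (1 - s - eigval i) * `|coef i xi| ^+ 2.
have t_ge0 i : 0 <= t i by rewrite mulr_ge0 ?exprn_ge0 // subr_ge0 ltW.
have /eqP sum_t0 : \sum_i t i == 0.
  rewrite eq_le sumr_ge0 ?andbT //.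
  under eq_bigr do rewrite /t mulrBl.
  by rewrite sumrB -mulr_sumr sum_sqr_coef xi_unit mulr1 -inner_proj_avg_spectral subr_le0.
have coef0 i : `|coef i xi| ^+ 2 = 0.
  move/eqP: (psumr_eq0P (fun i _ => t_ge0 i) sum_t0 (i := i) isT).
  by rewrite mulf_eq0 subr_eq0 eq_sym (lt_eqF (lt_eigval i)) => /eqP.
by move: xi_unit; rewrite -sum_sqr_coef big1 // => /eqP; rewrite eq_sym oner_eq0.
Qed.

Lemma dominant_eigval (s : C) : 0 <= s -> s *+ 2 < 1 ->
  1 - s <= inner (proj_avg xi) xi ->
  exists j, (forall k, k != j -> eigval k != eigval j) /\
            1 - s *+ 2 <= `|coef j xi| ^+ 2.
Proof.
move=> s0 s_small hq; have [j hj] := exists_eigval_ge (ger0_real s0) hq.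
have other_le k : k != j -> eigval k <= s.
  move=> kj; apply: le_trans (eigval_le_subr kj) _.
  by rewrite lerBlDr -lerBlDl.
exists j; split.
  move=> k kj; apply/negbT/lt_eqF; apply: le_lt_trans (other_le k kj) _.
  by apply: lt_le_trans hj; rewrite ltrBrDr -mulr2n.
have : 1 - s <= `|coef j xi| ^+ 2 + s.
  apply: (le_trans hq); rewrite inner_proj_avg_spectral (bigD1 j) //=.
  apply: lerD; first by rewrite ler_piMl ?exprn_ge0 ?eigval_le1.
  apply: le_trans (_ : \sum_(i | i != j) s * `|coef i xi| ^+ 2 <= _).
    by apply: ler_sum => i ij; rewrite ler_wpM2r ?exprn_ge0 ?other_le.
  rewrite -mulr_sumr ler_piMr // -xi_unit -sum_sqr_coef [leRHS](bigD1 j) //=.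
  by rewrite lerDr exprn_ge0.
by rewrite mulr2n opprD addrA !lerBlDr.
Qed.

Lemma exists_char_near (s : C) : 0 <= s -> s *+ 2 < 1 ->
  1 - s <= inner (proj_avg xi) xi ->
  exists beta : gT -> C,
    [/\ forall g h, beta (g * h)%g = beta g * beta h,
        forall g, `|beta g| = 1 &
        forall g (a : C), (1 - s *+ 2) * `|beta g - a| ^+ 2
                          <= sqnorm (fun x => lreg g xi x - a * xi x)].
Proof.
move=> s0 s_small hq; have [j [simple_j coef_j]] := dominant_eigval s0 s_small hq.
exists (eig_char j); split; [exact: eig_charM | exact: normr_eig_char |].
move=> g a; apply: le_trans (sqr_coef_eig_char_le simple_j g a).
by rewrite ler_wpM2r ?exprn_ge0.
Qed.

End UnitVector.
End AverageProjection.

Lemma mul_conj_subE (C : numClosedFieldType) (al a1 a2 b1 b2 : C) : al * al^* = 1 ->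
  a1 * a2^* - b1 * b2^* = - (al * a1 * (b2 - al * a2)^*) - (b1 - al * a1) * b2^*.
Proof.
move=> al_unit; rewrite rmorphB rmorphM /= mulrBr mulrBl opprB.
by rewrite mulrACA al_unit mul1r opprB addrA subrK.
Qed.

Section SpectralGap.
Variables (C : numClosedFieldType) (gT : finGroupType) (S : {set gT}).
Implicit Types (v w F xi : gT -> C).

Lemma sqnorm_sub_avg_op_ge (d : C) v : 0 <= d -> d <= 1 -> avg0_bound S d ->
  orth_const v -> (1 - d) ^+ 2 * sqnorm v <= sqnorm (fun x => v x - avg_op S v x).
Proof.
move=> d0 d1 bound_d v_orth; have := bound_d v v_orth; rewrite /l2norm.
set A := avg_op S v; set D := fun x => v x - A x.
set l := sqrtC (sqnorm v); set lD := sqrtC (sqnorm D) => A_le.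
have l0 : 0 <= l by rewrite sqrtC_ge0 sqnorm_ge0.
rewrite -[sqnorm v]sqrtCK -[sqnorm D]sqrtCK -/l -/lD -exprMn.
rewrite ler_sqr ?nnegrE ?sqrtC_ge0 ?mulr_ge0 ?subr_ge0 ?sqnorm_ge0 //.
have [->|l_neq0] := eqVneq l 0; first by rewrite mulr0 sqrtC_ge0 sqnorm_ge0.
have l_gt0 : 0 < l by rewrite lt_def l_neq0 l0.
have split_v : sqnorm v = inner D v + inner A v.
  rewrite -inner_self /inner -big_split /=; apply: eq_bigr => x _.
  by rewrite -mulrDl /D subrK.
rewrite -(ler_pM2r l_gt0) mulrBl mul1r mulrBl lerBlDr -expr2 /l /lD sqrtCK.
apply: le_trans (real_ler_norm (ger0_real (sqnorm_ge0 v))) _.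
rewrite {1}split_v; apply: le_trans (ler_normD _ _) _; apply: lerD.
  exact: normr_inner_le.
by apply: le_trans (normr_inner_le _ _) _; rewrite ler_wpM2r.
Qed.

Definition corr_fun xi (h x : gT) : C := xi x * (xi (x * h)%g)^*.

Lemma inner_proj_avg_corr xi : inner (proj_avg xi xi) xi =
  #|gT|%:R^-1 * \sum_h `|\sum_x corr_fun xi h x| ^+ 2.
Proof.
rewrite inner_proj_avg; congr (_ * _); rewrite /inner /corr_fun.
under eq_bigr do rewrite sqr_normr_sum.
under [RHS]eq_bigr do rewrite sqr_normr_sum.
rewrite [RHS]exchange_big /=.
transitivity (\sum_x \sum_y \sum_g (xi x * (xi y)^*) *
    (xi (g^-1 * x)%g * (xi (g^-1 * y)%g)^*)^*); last first.
  apply: eq_bigr => x _; rewrite [RHS](reindex_inj (mulgI x^-1)%g) /=.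
  apply: eq_bigr => y _.
  have inj : injective (fun g : gT => (g^-1 * x)%g).
    by move=> g1 g2 /mulIg /invg_inj.
  rewrite [RHS](reindex_inj inj) /=; apply: eq_bigr => g _.
  by rewrite mulVKg mulgA mulgK.
rewrite exchange_big /=; under eq_bigr do rewrite exchange_big /=.
do 3!apply: eq_bigr => ? _; by rewrite /lreg !rmorphM /= !conjCK mulrACA.
Qed.

Lemma sum_sqnorm_corr_fun xi : \sum_h sqnorm (corr_fun xi h) = sqnorm xi ^+ 2.
Proof.
rewrite /sqnorm exchange_big /= expr2 mulr_suml; apply: eq_bigr => x _.
rewrite /corr_fun; under eq_bigr do rewrite normrM norm_conjC exprMn.
rewrite -mulr_sumr (reindex_inj (mulgI x^-1)%g) /=.
by under eq_bigr do rewrite mulKVg.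
Qed.

Lemma avg_op_subr_const F (m : C) x : (0 < #|S|)%N ->
  avg_op S (fun y => F y - m) x = avg_op S F x - m.
Proof.
move=> S_gt0; rewrite /avg_op /lreg sumrB sumr_const mulrBr -[m *+ _]mulr_natl mulrA.
by rewrite mulVf ?mul1r // pnatr_eq0 -lt0n.
Qed.

Lemma sqnorm_sub_avg_op_le F : (0 < #|S|)%N ->
  sqnorm (fun x => F x - avg_op S F x) <=
  #|S|%:R^-1 * \sum_(g in S) sqnorm (fun x => F x - lreg g F x).
Proof.
move=> S_gt0; have S_neq0 : #|S|%:R != 0 :> C by rewrite pnatr_eq0 -lt0n.
have avg_diff x : F x - avg_op S F x = #|S|%:R^-1 * \sum_(g in S) (F x - lreg g F x).
  rewrite sumrB sumr_const mulrBr /avg_op -[F x *+ _]mulr_natl mulrA.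
  by rewrite mulVf // mul1r.
rewrite (eq_sqnorm avg_diff) /sqnorm exchange_big /= mulr_sumr.
apply: ler_sum => x _; rewrite normrM exprMn normfV normr_nat.
apply: le_trans (ler_wpM2l _ (sqr_normr_sum_le _ _)) _.
  by rewrite exprn_ge0 // invr_ge0 ler0n.
rewrite mulrA; apply: ler_wpM2r.
  by apply: sumr_ge0 => g _; rewrite exprn_ge0.
by rewrite expr2 -mulrA mulVf // mulr1.
Qed.

Lemma sum_sqnorm_corr_fun_sub_lreg_le xi g (al : C) : `|al| = 1 ->
  \sum_h sqnorm (fun x => corr_fun xi h x - lreg g (corr_fun xi h) x) <=
  4%:R * (sqnorm xi * sqnorm (fun x => lreg g xi x - al * xi x)).
Proof.
move=> al_unit; set b := lreg g xi; set r := fun x => b x - al * xi x.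
have al_conj : al * al^* = 1 by rewrite -normCK al_unit expr1n.
have -> : \sum_h sqnorm (fun x => corr_fun xi h x - lreg g (corr_fun xi h) x) =
    \sum_x \sum_y `|xi x * (xi y)^* - b x * (b y)^*| ^+ 2.
  rewrite /sqnorm exchange_big /=; apply: eq_bigr => x _.
  rewrite (reindex_inj (mulgI x^-1)%g) /=; apply: eq_bigr => y _.
  by rewrite /corr_fun /b /lreg mulVKg mulgA mulgK.
apply: le_trans (_ : \sum_x \sum_y 2%:R * (`|xi x| ^+ 2 * `|r y| ^+ 2 +
                     `|r x| ^+ 2 * `|b y| ^+ 2) <= _).
  apply: ler_sum => x _; apply: ler_sum => y _.
  rewrite (mul_conj_subE _ _ _ _ al_conj); apply: le_trans (sqr_normrD_le _ _) _.
  by rewrite !normrN !normrM !norm_conjC !exprMn al_unit expr1n mul1r.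
under eq_bigr do rewrite -mulr_sumr big_split.
rewrite -mulr_sumr big_split /= -!big_distrlr /= -/(sqnorm xi) -/(sqnorm r).
by rewrite -/(sqnorm b) /b sqnorm_lreg [sqnorm r * _]mulrC mulrDr -mulrDl -natrD.
Qed.

Definition mean F : C := #|gT|%:R^-1 * \sum_x F x.

Lemma mulr_card_mean F : #|gT|%:R * mean F = \sum_x F x.
Proof. by rewrite /mean mulVKf ?card_neq0. Qed.

Lemma orth_const_sub_mean F : orth_const (fun x => F x - mean F).
Proof.
rewrite /orth_const; under eq_bigr do rewrite rmorph1 mulr1.
by rewrite sumrB sumr_const -mulr_natl mulr_card_mean subrr.
Qed.

Lemma poincare_sqnorm_sub_mean (d : C) F : 0 <= d -> d <= 1 -> avg0_bound S d ->
  (0 < #|S|)%N -> (1 - d) ^+ 2 * sqnorm (fun x => F x - mean F) <=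
  #|S|%:R^-1 * \sum_(g in S) sqnorm (fun x => F x - lreg g F x).
Proof.
move=> d0 d1 bound_d S_gt0; apply: le_trans (sqnorm_sub_avg_op_le F S_gt0).
apply: le_trans (sqnorm_sub_avg_op_ge d0 d1 bound_d (orth_const_sub_mean F)) _.
by rewrite le_eqVlt; apply/orP; left; apply/eqP/eq_sqnorm => x;
  rewrite avg_op_subr_const // opprB addrA subrK.
Qed.

Lemma one_sub_inner_proj_avg xi : sqnorm xi = 1 ->
  1 - inner (proj_avg xi xi) xi =
  \sum_h sqnorm (fun x => corr_fun xi h x - mean (corr_fun xi h)).
Proof.
move=> xi_unit; rewrite inner_proj_avg_corr.
under [RHS]eq_bigr do rewrite (sqnorm_sub_mean (mulr_card_mean _)).
rewrite sumrB sum_sqnorm_corr_fun xi_unit expr1n; congr (_ - _).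
rewrite mulr_sumr; apply: eq_bigr => h _.
rewrite /mean normrM normfV normr_nat exprMn [in RHS]expr2 !mulrA.
by rewrite mulfV ?card_neq0 ?mul1r.
Qed.

Lemma proj_avg_defect_le (d e2 : C) xi alpha :
  0 <= d -> d <= 1 -> avg0_bound S d -> (0 < #|S|)%N -> sqnorm xi = 1 ->
  (forall g, g \in S -> `|alpha g| = 1) ->
  (forall g, g \in S -> sqnorm (fun x => lreg g xi x - alpha g * xi x) <= e2) ->
  (1 - d) ^+ 2 * (1 - inner (proj_avg xi xi) xi) <= 4%:R * e2.
Proof.
move=> d0 d1 bound_d S_gt0 xi_unit alpha_unit xi_almost_inv.
rewrite one_sub_inner_proj_avg // mulr_sumr.
apply: le_trans (ler_sum _ (fun h _ => poincare_sqnorm_sub_mean _ d0 d1 bound_d S_gt0)) _.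
rewrite -mulr_sumr exchange_big /=.
apply: le_trans (_ : #|S|%:R^-1 * \sum_(g in S) 4%:R * e2 <= _).
  rewrite ler_wpM2l ?invr_ge0 ?ler0n // ler_sum // => g gS.
  apply: le_trans (sum_sqnorm_corr_fun_sub_lreg_le _ _ (alpha_unit g gS)) _.
  by rewrite xi_unit mul1r ler_wpM2l ?ler0n ?xi_almost_inv.
by rewrite sumr_const -[4%:R * e2 *+ _]mulr_natl mulKf // pnatr_eq0 -lt0n.
Qed.

End SpectralGap.

Section Arithmetic.
Variables (R : numFieldType) (t : R).
Hypotheses (t_ge0 : 0 <= t) (t_small : 100%:R * t < 4%:R).

Lemma small_le1 : t <= 1.
Proof.
apply: ltW; rewrite -(ltr_pM2l (_ : 0 < 100%:R)) ?ltr0n // mulr1.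
by apply: lt_le_trans t_small _; rewrite ler_nat.
Qed.

Lemma mul8_sqr_lt1 : 8%:R * t ^+ 2 < 1.
Proof.
apply: le_lt_trans (_ : 8%:R * t < 1).
  by rewrite ler_wpM2l ?ler0n // expr2 ler_piMr ?small_le1.
rewrite -(ltr_pM2l (_ : 0 < 100%:R)) ?ltr0n // mulr1 mulrCA.
apply: (@lt_le_trans _ _ (8%:R * 4%:R)); first by rewrite ltr_pM2l ?ltr0n.
by rewrite -natrM ler_nat.
Qed.

Lemma le_mul100_of_sqr_bound (y : R) : 0 <= y -> y <= 4%:R ->
  (1 - 8%:R * t ^+ 2) * y <= t ^+ 2 -> y <= 100%:R * t.
Proof.
move=> y0 y4; rewrite mulrBl mul1r lerBlDr => y_le.
apply: le_trans y_le _; apply: le_trans (_ : t ^+ 2 + 8%:R * t ^+ 2 * 4%:R <= _).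
  by rewrite lerD2l ler_wpM2l // mulr_ge0 ?ler0n ?exprn_ge0.
apply: le_trans (_ : 33%:R * t <= _); last by rewrite ler_wpM2r // ler_nat.
rewrite mulrAC -natrM -[X in X + _]mul1r -mulrDl nat1r expr2 mulrA.
by rewrite ler_piMr ?small_le1 // mulr_ge0 ?ler0n.
Qed.

End Arithmetic.

Section ApproximateCharacter.
Variables (C : numClosedFieldType) (gT : finGroupType) (S : {set gT}).
Variables (delta eps : C) (alpha xi : gT -> C).
Hypotheses (delta_norm : is_avg0_norm S delta) (delta_lt1 : delta < 1).
Hypotheses (S_gt0 : (0 < #|S|)%N) (alpha_unit : forall g, g \in S -> `|alpha g| = 1).
Hypotheses (xi_unit : sqnorm xi = 1) (eps_gt0 : 0 < eps).
Hypothesis xi_almost_inv :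
  forall g, g \in S -> sqnorm (fun x => lreg g xi x - alpha g * xi x) <= eps ^+ 2.

Let t := eps / (1 - delta).
Let gap_gt0 : 0 < 1 - delta. Proof. by rewrite subr_gt0. Qed.
Let t_ge0 : 0 <= t. Proof. by rewrite ltW // divr_gt0. Qed.
Let eps_eq : eps = t * (1 - delta). Proof. by rewrite /t mulfVK // lt0r_neq0. Qed.

Lemma inner_proj_avg_ge : 1 - 4%:R * t ^+ 2 <= inner (proj_avg xi xi) xi.
Proof.
case: delta_norm => delta_ge0 delta_bound _.
have := proj_avg_defect_le delta_ge0 (ltW delta_lt1) delta_bound S_gt0 xi_unit
  alpha_unit xi_almost_inv.
rewrite eps_eq exprMn mulrA [_ * (1 - delta) ^+ 2]mulrC ler_pM2l ?exprn_gt0 //.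
by rewrite !lerBlDr addrC.
Qed.

Lemma exists_char_sqr_dist_le : exists beta : gT -> C,
  [/\ forall g h, beta (g * h)%g = beta g * beta h,
      forall g, `|beta g| = 1 &
      forall g, g \in S -> `|beta g - alpha g| ^+ 2 <= 100%:R * t].
Proof.
have sqr_dist_le4 beta g : `|beta| = 1 -> g \in S -> `|beta - alpha g| ^+ 2 <= 4%:R.
  move=> beta_unit gS; rewrite (_ : 4%:R = 2%:R ^+ 2); last by rewrite -natrX.
  rewrite ler_sqr ?nnegrE ?ler0n // (le_trans (ler_normB _ _)) //.
  by rewrite beta_unit alpha_unit.
have [large|small] := boolP (4%:R <= 100%:R * t).
  exists (fun=> 1); split=> [g h|g|g gS]; rewrite ?mulr1 ?normr1 //.
  by apply: le_trans large; rewrite sqr_dist_le4 ?normr1.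
have t_small : 100%:R * t < 4%:R.
  by rewrite real_ltNge ?realn // ger0_real // mulr_ge0 ?ler0n.
have s_ge0 : 0 <= 4%:R * t ^+ 2 by rewrite mulr_ge0 ?ler0n ?exprn_ge0.
have s2E : (4%:R * t ^+ 2) *+ 2 = 8%:R * t ^+ 2 by rewrite -mulrnAl -mulrnA.
have [|beta [betaM beta_unit beta_dist]] := exists_char_near xi_unit s_ge0 _
  inner_proj_avg_ge; first by rewrite s2E mul8_sqr_lt1.
exists beta; split=> // g gS; apply: le_mul100_of_sqr_bound; rewrite ?exprn_ge0 //.
  exact: sqr_dist_le4.
rewrite -s2E; apply: le_trans (beta_dist g (alpha g)) _.
apply: le_trans (xi_almost_inv gS) _; rewrite eps_eq exprMn ler_piMr ?exprn_ge0 //.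
rewrite exprn_ile1 ?(ltW gap_gt0) // lerBlDr lerDl; by case: delta_norm.
Qed.

End ApproximateCharacter.

Theorem lemmaA4 (C : numClosedFieldType) (gT : finGroupType) (S : {set gT})
  (hgen : <<S>>%g = [set: gT])
  (hsym : forall g : gT, g \in S -> (g^-1)%g \in S)
  (delta : C) (hdelta : is_avg0_norm S delta) (hdelta1 : delta < 1)
  (alpha : gT -> C) (halpha : forall g : gT, g \in S -> `|alpha g| = 1)
  (xi : gT -> C) (hxi : l2norm xi = 1)
  (eps : C)
  (heps_ub : forall g : gT, g \in S ->
     l2norm (fun x => lreg g xi x - alpha g * xi x) <= eps)
  (heps_att : exists2 g : gT, g \in S &
     l2norm (fun x => lreg g xi x - alpha g * xi x) = eps)
  (heps_pos : 0 < eps) :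
  exists chi : gT -> C, is_character chi /\
    forall g : gT, g \in S ->
      `|(chi g)^* - alpha g| <= sqrtC (100%:R * eps / (1 - delta)).
Proof.
have S_gt0 : (0 < #|S|)%N by case: heps_att => g gS _; apply/card_gt0P; exists g.
have xi_unit : sqnorm xi = 1 by rewrite sqnorm_l2norm hxi expr1n.
have xi_almost_inv g : g \in S ->
    sqnorm (fun x => lreg g xi x - alpha g * xi x) <= eps ^+ 2.
  by move=> gS; apply: sqnorm_le_sqr (ltW heps_pos) (heps_ub g gS).
have [beta [betaM beta_unit beta_near]] := exists_char_sqr_dist_le hdelta hdelta1
  S_gt0 halpha xi_unit heps_pos xi_almost_inv.
exists (fun g => (beta g)^*); split.
  by split=> [g h|g]; rewrite ?betaM ?rmorphM // norm_conjC.
move=> g gS; rewrite conjCK -mulrA -[`|_|]sqrCK ?normr_ge0 //.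
rewrite ler_sqrtC ?nnegrE ?exprn_ge0 ?beta_near //.
exact: le_trans (exprn_ge0 _ (normr_ge0 _)) (beta_near g gS).
Qed.
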